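(* Let $f,\lambda,\alpha,\beta>0$ be reals and let $G$ be a finite graph with at least one vertex, of maximum degree $\Delta\ge1$, in which the subgraph induced by the neighbourhood of every vertex has at most $\Delta^2/f$ edges. Let $\mathbf{I}$ be an independent set drawn from the hard-core model at fugacity $\lambda$ on $G$. Then for every $v\in V(G)$, \[ \alpha \Pr(v\in\mathbf{I}) + \beta\,\mathbb{E}|N(v)\cap \mathbf{I}| \ge \frac{\lambda}{1+\lambda}\min_{z\ge0}\left(\alpha(1+\lambda)^{-z} + \beta z(1+\lambda)^{-\frac{2\Delta^2}{fz}}\right)\,. \] Moreover, \[ \frac{1}{|V(G)|}\mathbb{E}|\mathbf{I}| \ge \min_{z>0}\max\left\{\frac{\lambda}{1+\lambda}(1+\lambda)^{-z},\ \frac{\lambda}{1+\lambda}\frac{z}{\Delta}(1+\lambda)^{-\frac{2\Delta^2}{fz}}\right\}\,. \]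
   Context: For a graph $G$ with set $\mathcal{I}(G)$ of independent sets (including the empty set) and $\lambda>0$, the hard-core model on $G$ at fugacity $\lambda$ is the probability distribution on $\mathcal{I}(G)$ with $\Pr(\mathbf{I}=I)=\lambda^{|I|}/Z_G(\lambda)$, where $Z_G(\lambda)=\sum_{I\in\mathcal{I}(G)}\lambda^{|I|}$. In the first inequality, the term $z(1+\lambda)^{-2\Delta^2/(fz)}$ at $z=0$ is interpreted as its limit $0$. *)

From HB Require Import structures.
From mathcomp Require Import all_boot all_order all_algebra.
From mathcomp Require Import reals exp.
Set Implicit Arguments. Unset Strict Implicit. Unset Printing Implicit Defensive.
Import Order.TTheory GRing.Theory Num.Theory.
Local Open Scope ring_scope.

(* A finite simple graph is given by a vertex finType T and an adjacency
   relation e : rel T, assumed symmetric and irreflexive in the theorem. *)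
Section Graph.
Variables (T : finType) (e : rel T).

Definition nbhd (v : T) : {set T} := [set u | e v u].
Definition deg (v : T) : nat := #|nbhd v|.
Definition maxdeg : nat := \max_(v : T) deg v.

Definition induced_edges (S : {set T}) : {set {set T}} :=
  [set A : {set T} | (A \subset S) &&
     [exists u : T, exists w : T, (A == [set u; w]) && e u w]].

Definition independent (I : {set T}) : bool :=
  [forall u in I, forall w in I, ~~ e u w].

Section HardCore.
Variables (R : realType) (lam : R).

Definition hc_weight (I : {set T}) : R := lam ^+ #|I|.
Definition hc_Z : R := \sum_(I : {set T} | independent I) hc_weight I.
Definition hc_prob (I : {set T}) : R :=
  if independent I then hc_weight I / hc_Z else 0.
Definition hc_Pr_in (v : T) : R := \sum_(I : {set T} | v \in I) hc_prob I.
Definition hc_E_nbhd (v : T) : R :=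
  \sum_(I : {set T}) (#|nbhd v :&: I|)%:R * hc_prob I.
Definition hc_E_size : R := \sum_(I : {set T}) (#|I|)%:R * hc_prob I.
End HardCore.
End Graph.

(* z * (1+lam)^(-c/z), interpreted as its limit 0 at z = 0 *)
Definition zpow_term (R : realType) (lam c z : R) : R :=
  if z == 0 then 0 else z * (1 + lam) `^ (- (c / z)).

From HB Require Import structures.
From mathcomp Require Import all_boot all_order all_algebra.
From mathcomp Require Import reals exp.
From mathcomp Require Import ring lra.
Import Order.TTheory GRing.Theory Num.Theory.

(** Condition on the part [J] of the independent set outside the closed
  neighbourhood of [v]: what remains is either [{v}], of weight [lam], or an
  independent subset of the set [U] of neighbours of [v] with no neighbour in
  [J].  With [Z] and [W] the sums of [lam^|C|] and [|C| lam^|C|] over such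
  subsets [C], the first claim reduces to [m (lam + Z) <= alpha lam + beta W].
  Apply the hypothesis at [z = |U| Z / (lam + Z)]: the [alpha]-part follows from
  [Z <= (1+lam)^|U|] and the log-sum inequality; for the [beta]-part, each [u]
  in [U] is occupied with weight at least [lam/(1+lam) Z (1+lam)^(-d_U(u))], so
  Jensen's inequality and [sum_u d_U(u) <= 2 e(N(v)) <= 2 Delta^2/f] bound [W].

  For the second claim, sum the first over all [v] with [alpha = K], [beta = 1].
  If [E|I|/n < lam/(1+lam)], choose [z0] with [lam/(1+lam) (1+lam)^(-z0) = E|I|/n]
  and [K] such that [z0] minimises the convex function
  [K (1+lam)^(-z) + z (1+lam)^(-c/z)]; comparing both sides at [z0] bounds the
  second term of the maximum by [E|I|/n]. *)

Set Implicit Arguments.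
Unset Strict Implicit.
Unset Printing Implicit Defensive.

Local Open Scope ring_scope.

Section PowerInequalities.
Context {R : realType}.
Implicit Types a x y : R.

Lemma powR_tangent a x y : 0 < a -> a `^ y * (1 + (x - y) * ln a) <= a `^ x.
Proof.
move=> a_gt0; rewrite /powR gt_eqF //.
have -> : x * ln a = (x - y) * ln a + y * ln a by ring.
by rewrite expRD mulrC ler_pM2r ?expR_gt0 ?expR_ge1Dx.
Qed.

Lemma powR_mean_le (I : finType) (P : {set I}) (d : I -> R) a : 0 < a ->
  (0 < #|P|)%N ->
  #|P|%:R * a `^ ((\sum_(i in P) d i) / #|P|%:R) <= \sum_(i in P) a `^ d i.
Proof.
move=> a_gt0 P_gt0; set n := #|P|%:R; set mu := _ / n.
have n_gt0 : 0 < n by rewrite ltr0n.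
have tangent i : a `^ mu * (1 + (d i - mu) * ln a) <= a `^ d i by exact: powR_tangent.
apply: le_trans (ler_sum _ (fun i _ => tangent i)).
rewrite -mulr_sumr big_split sumr_const -mulr_suml sumrB sumr_const /=.
by rewrite -/n -mulr_natr /mu divfK ?gt_eqF // subrr mul0r addr0 mulrC.
Qed.

Lemma onemV_le_ln x : 0 < x -> 1 - x^-1 <= ln x.
Proof.
move=> x_gt0; have := expR_ge1Dx (- ln x).
by rewrite expRN lnK ?posrE //; lra.
Qed.

Lemma log_sum_le (a1 a2 b1 b2 : R) : 0 < a1 -> 0 < a2 -> 0 < b1 -> 0 < b2 ->
  (a1 + a2) * ln ((a1 + a2) / (b1 + b2)) <= a1 * ln (a1 / b1) + a2 * ln (a2 / b2).
Proof.
move=> a1_gt0 a2_gt0 b1_gt0 b2_gt0.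
set S := a1 + a2; set B := b1 + b2.
have S_gt0 : 0 < S by rewrite addr_gt0.
have B_gt0 : 0 < B by rewrite addr_gt0.
have term a b : 0 < a -> 0 < b -> a - b * S / B <= a * ln (a / b) - a * ln (S / B).
  move=> a_gt0 b_gt0; rewrite -mulrBr -ln_div ?posrE ?divr_gt0 //.
  have -> : a - b * S / B = a * (1 - (a / b / (S / B))^-1) by field; rewrite !gt_eqF.
  by rewrite ler_pM2l // onemV_le_ln // !divr_gt0.
have := lerD (term _ _ a1_gt0 b1_gt0) (term _ _ a2_gt0 b2_gt0).
have -> : a1 - b1 * S / B + (a2 - b2 * S / B) = 0.
  by rewrite /S /B; field; rewrite -/B gt_eqF.
rewrite /S mulrDl; lra.
Qed.

End PowerInequalities.

Section OccupancyInequalities.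
Context {R : realType} (lam : R).
Hypothesis lam_gt0 : 0 < lam.
Local Notation q := (1 + lam).

Let q_gt1 : 1 < q. Proof. by rewrite ltrDl. Qed.
Let q_gt0 : 0 < q. Proof. exact: lt_trans ltr01 q_gt1. Qed.
Let lnq_gt0 : 0 < ln q. Proof. exact: ln_gt0. Qed.

Lemma occupancy_powR_le (Z : R) (n : nat) : 0 < Z -> Z <= q ^+ n ->
  (lam + Z) * q `^ (- (n%:R * Z / (lam + Z))) <= q.
Proof.
move=> Z_gt0 Z_le; have S_gt0 : 0 < lam + Z by rewrite addr_gt0.
have lnZ : ln Z <= n%:R * ln q.
  by move: Z_le; rewrite -ler_ln ?posrE ?exprn_gt0 // lnXn // mulr_natl.
have lsum := log_sum_le lam_gt0 Z_gt0 lam_gt0 ltr01.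
rewrite divff ?gt_eqF // ln1 mulr0 add0r divr1 [lam + 1]addrC ln_div ?posrE // in lsum.
rewrite -ler_ln ?posrE ?mulr_gt0 ?powR_gt0 // lnM ?posrE ?powR_gt0 // ln_powR.
rewrite -subr_le0 -(pmulr_rle0 _ S_gt0).
have -> : (lam + Z) * (ln (lam + Z) + - (n%:R * Z / (lam + Z)) * ln q - ln q)
    = (lam + Z) * (ln (lam + Z) - ln q) - Z * (n%:R * ln q).
  by field; rewrite gt_eqF.
by rewrite subr_le0; apply: le_trans lsum _; rewrite ler_pM2l.
Qed.

Lemma zpow_term_occupancy_le (c Z : R) (n : nat) : 0 <= c -> 0 < Z -> (0 < n)%N ->
  zpow_term lam c (n%:R * Z / (lam + Z)) * (lam + Z) <= n%:R * Z * q `^ (- (c / n%:R)).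
Proof.
move=> c_ge0 Z_gt0 n_gt0; have S_gt0 : 0 < lam + Z by rewrite addr_gt0.
have nR_gt0 : 0 < n%:R :> R by rewrite ltr0n.
set z := _ / _; have z_gt0 : 0 < z by rewrite divr_gt0 ?mulr_gt0.
have z_le : z <= n%:R by rewrite ler_pdivrMr // ler_pM2l // lerDr ltW.
rewrite /zpow_term gt_eqF // mulrAC divfK ?gt_eqF //.
rewrite ler_pM2l ?mulr_gt0 //; apply: ler_powR; first exact: ltW.
by rewrite lerN2 ler_wpM2l // lef_pV2 ?posrE.
Qed.

Lemma zpow_term_tangent (c z0 z : R) : 0 <= c -> 0 < z0 -> 0 <= z ->
  z0 * q `^ (- (c / z0)) + q `^ (- (c / z0)) * (1 + c / z0 * ln q) * (z - z0)
    <= zpow_term lam c z.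
Proof.
move=> c_ge0 z0_gt0; set E0 := q `^ _; rewrite le_eqVlt => /predU1P[<-|z_gt0].
  rewrite /zpow_term eqxx sub0r.
  have -> : z0 * E0 + E0 * (1 + c / z0 * ln q) * - z0 = - (E0 * (c * ln q)).
    by field; rewrite gt_eqF.
  by rewrite oppr_le0 mulr_ge0 ?powR_ge0 ?mulr_ge0 // ltW.
rewrite /zpow_term gt_eqF //.
have -> : z0 * E0 + E0 * (1 + c / z0 * ln q) * (z - z0)
    = z * (E0 * (1 + (- (c / z) - - (c / z0)) * ln q)).
  by field; rewrite !gt_eqF.
exact (ler_wpM2l (ltW z_gt0) (powR_tangent _ _ q_gt0)).
Qed.

Lemma zpow_term_argmin (c z0 z K : R) : 0 <= c -> 0 < z0 -> 0 <= z -> 0 <= K ->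
  K * ln q * q `^ (- z0) = q `^ (- (c / z0)) * (1 + c / z0 * ln q) ->
  K * q `^ (- z0) + zpow_term lam c z0 <= K * q `^ (- z) + zpow_term lam c z.
Proof.
move=> c_ge0 z0_gt0 z_ge0 K_ge0 slope.
have tz := zpow_term_tangent c_ge0 z0_gt0 z_ge0.
have := ler_wpM2l K_ge0 (powR_tangent (- z) (- z0) q_gt0).
have -> : K * (q `^ (- z0) * (1 + (- z - - z0) * ln q))
    = K * q `^ (- z0) - K * ln q * q `^ (- z0) * (z - z0) by ring.
rewrite {1}/zpow_term gt_eqF // slope; lra.
Qed.

Lemma max_le_of_weighted_bounds (c D X m : R) : 0 <= c -> 0 < D -> 0 < X ->
  (forall alpha beta mu : R, 0 < alpha -> 0 < beta ->
     (forall z : R, 0 <= z ->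
        mu <= lam / q * (alpha * q `^ (- z) + beta * zpow_term lam c z)) ->
     mu <= (alpha + beta * D) * X) ->
  (forall z : R, 0 < z ->
     m <= Num.max (lam / q * q `^ (- z)) (lam / q * (z / D) * q `^ (- (c / z)))) ->
  m <= X.
Proof.
move=> c_ge0 D_gt0 X_gt0 bound hm.
have lq_gt0 : 0 < lam / q by rewrite divr_gt0.
have powN_le1 x : 0 <= x -> q `^ (- x) <= 1.
  move=> x_ge0; rewrite -[X in _ <= X](powRr0 q).
  by apply: ler_powR; rewrite ?oppr_le0 // ltW.
have [lq_le|X_lt] := leP (lam / q) X.
  apply: le_trans (hm D D_gt0) _; rewrite ge_max divff ?gt_eqF // mulr1.
  by apply/andP; split; apply: le_trans lq_le;
    rewrite ger_pMr // powN_le1 // ?divr_ge0 // ltW.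
have r_gt1 : 1 < lam / (q * X).
  by rewrite ltr_pdivlMr ?mulr_gt0 // mul1r mulrC -ltr_pdivlMr.
set z0 := ln (lam / (q * X)) / ln q.
have z0_gt0 : 0 < z0 by rewrite divr_gt0 // ln_gt0.
have P_z0 : lam / q * q `^ (- z0) = X.
  rewrite /powR gt_eqF // mulNr /z0 divfK ?gt_eqF // expRN lnK ?posrE ?(lt_trans ltr01) //.
  by field; rewrite !gt_eqF.
set E0 := q `^ (- (c / z0)).
have s_gt0 : 0 < 1 + c / z0 * ln q.
  exact: ltr_wpDr (mulr_ge0 (divr_ge0 c_ge0 (ltW z0_gt0)) (ltW lnq_gt0)) ltr01.
(* [K] makes the derivative of [K q^(-z) + zpow_term lam c z] vanish at [z0]. *)
set K := E0 * (1 + c / z0 * ln q) / (ln q * q `^ (- z0)).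
have K_gt0 : 0 < K by rewrite /K divr_gt0 ?mulr_gt0 ?powR_gt0.
have slope : K * ln q * q `^ (- z0) = E0 * (1 + c / z0 * ln q).
  by rewrite /K -mulrA divfK // mulf_neq0 ?gt_eqF ?powR_gt0.
have argmin z : 0 <= z -> lam / q * (K * q `^ (- z0) + zpow_term lam c z0)
    <= lam / q * (K * q `^ (- z) + 1 * zpow_term lam c z).
  move=> z_ge0; rewrite mul1r; apply: ler_wpM2l; first exact: ltW.
  exact: zpow_term_argmin (ltW K_gt0) slope.
have := bound K 1 _ K_gt0 ltr01 argmin.
rewrite mulrDr mulrCA P_z0 /zpow_term gt_eqF // mul1r mulrDl -/E0 => B_z0.
apply: le_trans (hm z0 z0_gt0) _; rewrite ge_max P_z0 lexx /= -/E0.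
rewrite (_ : _ * _ * E0 = lam / q * (z0 * E0) / D); last by field; rewrite !gt_eqF.
by rewrite ler_pdivrMr // mulrC; lra.
Qed.

End OccupancyInequalities.

Lemma big_subset_split (R : Type) (idx : R) (op : Monoid.com_law idx) (T : finType)
    (S A : {set T}) (F : {set T} -> R) :
  \big[op/idx]_(K : {set T} | K \subset S) F K =
  \big[op/idx]_(J : {set T} | J \subset S :\: A)
     \big[op/idx]_(B : {set T} | B \subset S :&: A) F (J :|: B).
Proof.
rewrite pair_big /= (reindex_onto (fun p : {set T} * {set T} => p.1 :|: p.2)
  (fun K => (K :\: A, K :&: A))) /=; last by move=> K _; rewrite setUC setID.
apply: eq_bigl => -[J B] /=; rewrite subsetD subsetI.
apply/andP/and3P => [[KS /eqP[eJ eB]]|[/andP[JS JA] BS BA]].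
  rewrite -[in [disjoint J & A]]eJ -[in B \subset A]eB subsetIr disjoints_subset subsetDr.
  rewrite andbT; split=> //; [rewrite -eJ | rewrite -eB];
    apply: subset_trans KS; [exact: subsetDl | exact: subsetIl].
split; first by rewrite subUset JS.
rewrite setDUl setIUl (setDidPl JA) (disjoint_setI0 JA) (setIidPl BA).
by rewrite (eqP (_ : B :\: A == set0)) ?setU0 ?set0U // setD_eq0.
Qed.

Lemma sum_expr_subsets (R : comPzSemiRingType) (T : finType) (X : {set T}) (x : R) :
  \sum_(K : {set T} | K \subset X) x ^+ #|K| = (1 + x) ^+ #|X|.
Proof.
have := @bigA_distr R 0 1 *%R +%R T (fun i => if i \in X then x else 0) (fun=> 1).
rewrite (bigID (mem X)) /= [X in _ * X]big1 => [|i /negPf->]; last by rewrite add0r.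
rewrite mulr1 (eq_bigr (fun=> 1 + x)) => [|i ->]; last by rewrite addrC.
rewrite prodr_const => ->; rewrite big_mkcond /=; apply: eq_bigr => K _.
rewrite -big_mkcond /=; case: ifPn => [/subsetP KX | /subsetPn[i iK iX]].
  by rewrite -prodr_const; apply: eq_bigr => i /KX ->.
by rewrite (bigD1 i) //= (negPf iX) mul0r.
Qed.

Section Graphs.
Variables (T : finType) (e : rel T).
Hypotheses (e_sym : symmetric e) (e_irr : irreflexive e).

Definition closed_nbhd (v : T) : {set T} := v |: nbhd e v.

Definition uncovered (J : {set T}) : {set T} := [set u | [forall w in J, ~~ e u w]].

Lemma independentP (I : {set T}) :
  reflect {in I &, forall u w, ~~ e u w} (independent e I).
Proof.
apply: (iffP forall_inP) => [indI u w uI | indI u uI].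
  by move/forall_inP: (indI u uI); apply.
by apply/forall_inP => w; apply: indI.
Qed.

Lemma independentS (A B : {set T}) : A \subset B -> independent e B -> independent e A.
Proof.
move=> /subsetP AB /independentP indB; apply/independentP => u w /AB uB /AB.
exact: indB.
Qed.

Lemma independent0 : independent e set0.
Proof. by apply/independentP => u w; rewrite inE. Qed.

Lemma independent1 (x : T) : independent e [set x].
Proof. by apply/independentP => u w /set1P-> /set1P->; rewrite e_irr. Qed.

Lemma independentU (J K : {set T}) :
  independent e (J :|: K) = [&& independent e J, independent e K & K \subset uncovered J].
Proof.
apply/idP/and3P => [indJK | [/independentP indJ /independentP indK /subsetP KJ]].
  rewrite (independentS (subsetUl _ _) indJK) (independentS (subsetUr _ _) indJK).
  split=> //; apply/subsetP => u uK; rewrite inE; apply/forall_inP => w wJ.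
  by move/independentP: indJK; apply; rewrite inE ?uK ?wJ ?orbT.
have KJ' u w : u \in K -> w \in J -> ~~ e u w.
  by move=> /KJ; rewrite inE => /forall_inP; apply.
apply/independentP => u w; rewrite !inE => /orP[uJ|uK] /orP[wJ|wK].
- exact: indJ.
- by rewrite e_sym KJ'.
- exact: KJ'.
- exact: indK.
Qed.

Lemma sum_card_nbhdI (I : {set T}) :
  (\sum_(v : T) #|nbhd e v :&: I| = \sum_(u in I) deg e u)%N.
Proof.
have cardE v : #|nbhd e v :&: I| = (\sum_(u in I) e v u)%N.
  rewrite -sum1_card big_mkcond [RHS]big_mkcond; apply: eq_bigr => u _.
  by rewrite !inE; case: (e v u); case: (u \in I).
under eq_bigr do rewrite cardE; rewrite exchange_big; apply: eq_bigr => u _.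
rewrite /deg -sum1_card [RHS]big_mkcond; apply: eq_bigr => w _.
by rewrite inE e_sym; case: (e u w).
Qed.

Lemma induced_edgesS (U V : {set T}) : U \subset V ->
  (#|induced_edges e U| <= #|induced_edges e V|)%N.
Proof.
move=> UV; apply/subset_leq_card/subsetP => A; rewrite !inE.
by case/andP => AU ->; rewrite (subset_trans AU UV).
Qed.

Lemma sum_card_nbhdI_le (U : {set T}) :
  (\sum_(u in U) #|nbhd e u :&: U| <= 2 * #|induced_edges e U|)%N.
Proof.
set P := [set p : T * T | [&& p.1 \in U, p.2 \in U & e p.1 p.2]].
have -> : (\sum_(u in U) #|nbhd e u :&: U|)%N = #|P|.
  rewrite -sum1_card (eq_bigl (fun p : T * T => (p.1 \in U) && ((p.2 \in U) && e p.1 p.2)));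
    last by move=> p; rewrite inE.
  rewrite -(pair_big_dep (fun u => u \in U) (fun u w => (w \in U) && e u w) (fun _ _ => 1%N)).
  by apply: eq_bigr => u uU; rewrite -sum1_card; apply: eq_bigl => w; rewrite !inE andbC.
rewrite -sum1_card (partition_big (fun p : T * T => [set p.1; p.2]) (mem (induced_edges e U))) /=;
    last first.
  move=> [a b]; rewrite inE /= => /and3P[aU bU eab]; rewrite inE; apply/andP; split.
    by apply/subsetP => x; rewrite !inE => /orP[/eqP->|/eqP->].
  by apply/existsP; exists a; apply/existsP; exists b; rewrite eqxx eab.
rewrite mulnC -sum_nat_const; apply: leq_sum => X.
rewrite inE => /andP[_ /existsP[a /existsP[b /andP[/eqP eX eab]]]].
rewrite sum1_card; apply: (leq_trans (subset_leq_card (_ : _ \subset [set (a, b); (b, a)]))).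
  apply/subsetP => -[x y]; rewrite unfold_in /= !inE /= => /andP[/and3P[_ _ exy] /eqP exyX].
  have nxy : x != y by apply: contraTneq exy => ->; rewrite e_irr.
  have: x \in [set a; b] /\ y \in [set a; b] by rewrite -eX -exyX !inE !eqxx ?orbT.
  by rewrite !inE; move: nxy => /[swap] -[/orP[]/eqP-> /orP[]/eqP->]; rewrite ?eqxx ?orbT.
by rewrite cards2; case: (_ != _).
Qed.

End Graphs.

Section HardCoreSums.
Variables (R : realType) (T : finType) (e : rel T) (lam : R).
Hypotheses (e_sym : symmetric e) (e_irr : irreflexive e) (lam_ge0 : 0 <= lam).
Local Notation q := (1 + lam).

Definition indep_wt (K : {set T}) : R := if independent e K then lam ^+ #|K| else 0.

Definition hc_sum (S : {set T}) (F : {set T} -> R) : R :=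
  \sum_(K : {set T} | K \subset S) indep_wt K * F K.

Lemma indep_wt_ge0 (K : {set T}) : 0 <= indep_wt K.
Proof. by rewrite /indep_wt; case: ifP => // _; rewrite exprn_ge0. Qed.

Lemma indep_wtU (J K : {set T}) : [disjoint J & K] ->
  indep_wt (J :|: K) = indep_wt J * indep_wt K * (K \subset uncovered e J)%:R.
Proof.
move=> JK; rewrite /indep_wt independentU // cardsU (disjoint_setI0 JK) cards0 subn0 exprD.
by case: (independent e J); case: (independent e K); case: (_ \subset _);
  rewrite /= ?mulr1 ?mulr0 ?mul0r.
Qed.

Lemma sum_closed_nbhd (S J : {set T}) (v : T) (F : {set T} -> R) :
  v \in S -> J \subset S :\: closed_nbhd e v ->
  \sum_(B : {set T} | B \subset S :&: closed_nbhd e v) indep_wt (J :|: B) * F (J :|: B) =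
  indep_wt J * (lam * F (J :|: [set v]) +
                hc_sum (S :&: nbhd e v :&: uncovered e J) (fun C => F (J :|: C))).
Proof.
move=> vS /subsetDP[JS]; rewrite disjoints_subset => /subsetP Jcl.
have vJ : v \notin J by apply/negP => /Jcl; rewrite in_setC in_setU1 eqxx.
have NvJ u : u \in nbhd e v -> u \notin J.
  by move=> uN; apply/negP => /Jcl; rewrite in_setC in_setU1 uN orbT.
rewrite (bigID (fun B : {set T} => v \in B)) /= mulrDr; congr (_ + _).
  have wt_v : indep_wt [set v] = lam by rewrite /indep_wt independent1 // cards1.
  have v_unc : [set v] \subset uncovered e J.
    by rewrite sub1set inE; apply/forall_inP => w wJ; apply: contraL wJ => evw; rewrite NvJ ?inE.
  rewrite (bigD1 [set v]) /=; last by rewrite set11 sub1set !inE vS eqxx.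
  rewrite big1 ?addr0 => [|B /andP[/andP[BS vB] Bv]].
    by rewrite indep_wtU 1?disjoint_sym ?disjoints1 // wt_v v_unc mulr1 -!mulrA.
  have [u uB uv] : exists2 u, u \in B & u != v.
    apply/exists_inP; apply: contraNT Bv => /exists_inPn Bv1; apply/eqP/setP => u.
    by rewrite inE; apply/idP/eqP => [/Bv1/negPn/eqP|->].
  have evu : e v u by move: (subsetP BS u uB); rewrite !inE (negPf uv) => /andP[].
  have : ~~ independent e (J :|: B).
    by apply: contraL evu => /(independentS (subsetUr J B))/independentP/(_ v u vB uB).
  by rewrite /indep_wt => /negPf->; rewrite mul0r.
have ScvN : (S :&: closed_nbhd e v) :\ v = S :&: nbhd e v.
  by apply/setP => u; rewrite !inE; case: eqP => [->|]; rewrite ?e_irr ?andbF.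
under eq_bigl => B do rewrite -subsetD1 ScvN.
rewrite /hc_sum mulr_sumr; under [RHS]eq_bigl => B do rewrite subsetI.
rewrite big_mkcondr /=; apply: eq_bigr => B /subsetP BSN.
have JB : [disjoint J & B].
  rewrite disjoint_sym disjoints_subset; apply/subsetP => u /BSN.
  by rewrite !inE => /andP[_ uN]; apply: NvJ; rewrite inE.
by rewrite indep_wtU //; case: (_ \subset _); rewrite /= ?mulr1 ?mulr0 ?mul0r // mulrA.
Qed.

(* The spatial Markov property of the hard-core model at the closed
   neighbourhood of [v]. *)
Lemma hc_sum_condition (S : {set T}) (v : T) (F : {set T} -> R) : v \in S ->
  hc_sum S F = \sum_(J : {set T} | J \subset S :\: closed_nbhd e v)
    indep_wt J * (lam * F (J :|: [set v]) +
                  hc_sum (S :&: nbhd e v :&: uncovered e J) (fun C => F (J :|: C))).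
Proof.
move=> vS; rewrite {1}/hc_sum (big_subset_split _ _ (closed_nbhd e v)).
by apply: eq_bigr => J; apply: sum_closed_nbhd.
Qed.

Lemma eq_hc_sum (S : {set T}) (F G : {set T} -> R) :
  (forall K : {set T}, K \subset S -> F K = G K) -> hc_sum S F = hc_sum S G.
Proof. by move=> FG; apply: eq_bigr => K KS; rewrite FG. Qed.

Lemma hc_sumZ (S : {set T}) (a : R) (F : {set T} -> R) :
  hc_sum S (fun K => a * F K) = a * hc_sum S F.
Proof. by rewrite /hc_sum mulr_sumr; apply: eq_bigr => K _; rewrite mulrCA. Qed.

Lemma hc_sum_ge0 (S : {set T}) (F : {set T} -> R) :
  (forall K, 0 <= F K) -> 0 <= hc_sum S F.
Proof. by move=> F_ge0; apply: sumr_ge0 => K _; rewrite mulr_ge0 ?indep_wt_ge0. Qed.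

Lemma hc_sum1_ge1 (S : {set T}) : 1 <= hc_sum S (fun=> 1).
Proof.
rewrite /hc_sum (bigD1 set0) ?sub0set //= /indep_wt independent0 cards0 mulr1 lerDl.
by apply: sumr_ge0 => K _; rewrite mulr1 indep_wt_ge0.
Qed.

Lemma hc_sum1_le (S : {set T}) : hc_sum S (fun=> 1) <= q ^+ #|S|.
Proof.
rewrite -sum_expr_subsets; apply: ler_sum => K _; rewrite mulr1 /indep_wt.
by case: ifP => // _; rewrite exprn_ge0.
Qed.

Lemma hc_sum_card (S : {set T}) :
  hc_sum S (fun K => #|K|%:R) = \sum_(u in S) hc_sum S (fun K => (u \in K)%:R).
Proof.
rewrite /hc_sum exchange_big /=; apply: eq_bigr => K /subsetP KS.
rewrite -mulr_sumr -natr_sum -sum1_card big_mkcond [in RHS]big_mkcond /=.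
congr (_ * _%:R); apply: eq_bigr => u _.
by case: (boolP (u \in K)) => [/KS->|]; case: (u \in S).
Qed.

Lemma hc_sum_occupied_ge (U : {set T}) (u : T) : u \in U ->
  lam * hc_sum U (fun=> 1) <= q ^+ (#|nbhd e u :&: U|).+1 * hc_sum U (fun K => (u \in K)%:R).
Proof.
move=> uU; rewrite !(hc_sum_condition _ uU) !mulr_sumr.
apply: ler_sum => J /subsetDP[_]; rewrite disjoints_subset => /subsetP Jcl.
have uJ : u \notin J by apply/negP => /Jcl; rewrite in_setC in_setU1 eqxx.
rewrite (_ : hc_sum _ (fun C => (u \in J :|: C)%:R) = 0); last first.
  apply: big1 => C /subsetP CN; rewrite !inE (negPf uJ) /=.
  by case: (boolP (u \in C)) => [/CN|]; rewrite ?mulr0 // !inE e_irr andbF.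
rewrite !inE eqxx orbT addr0 !mulr1 mulrCA [X in _ <= X]mulrCA.
set d := #|nbhd e u :&: U|.
have q_ge1 : 1 <= q by rewrite lerDl.
have Z_le : hc_sum (U :&: nbhd e u :&: uncovered e J) (fun=> 1) <= q ^+ d.
  apply: le_trans (hc_sum1_le _) _; apply: ler_weXn2l => //.
  by apply: subset_leq_card; rewrite [nbhd e u :&: U]setIC subsetIl.
apply: ler_wpM2l; first exact: indep_wt_ge0.
rewrite [X in _ <= X]mulrC; apply: ler_wpM2l => //.
rewrite exprS mulrDl mul1r [lam + _]addrC; apply: lerD => //.
by rewrite ler_peMr // exprn_ege1.
Qed.

Lemma hc_sum_card_ge (U : {set T}) : (0 < #|U|)%N ->
  lam / q * hc_sum U (fun=> 1) * #|U|%:R *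
    q `^ (- ((\sum_(u in U) #|nbhd e u :&: U|%:R) / #|U|%:R))
  <= hc_sum U (fun K => #|K|%:R).
Proof.
move=> U_gt0; have q_gt0 : 0 < q := ltr_wpDr lam_ge0 ltr01.
have occupied u : u \in U ->
    lam / q * hc_sum U (fun=> 1) * q `^ (- #|nbhd e u :&: U|%:R)
    <= hc_sum U (fun K => (u \in K)%:R).
  move=> uU; rewrite powR_invn; last exact: ltW.
  rewrite (_ : _ / _ * _ / _ = lam * hc_sum U (fun=> 1) / q ^+ #|nbhd e u :&: U|.+1).
    by rewrite ler_pdivrMr ?exprn_gt0 // [X in _ <= X]mulrC hc_sum_occupied_ge.
  by rewrite exprS; field; rewrite expf_neq0 gt_eqF.
rewrite hc_sum_card; apply: le_trans (ler_sum _ occupied); rewrite -mulr_sumr -mulrA.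
apply: ler_wpM2l; first by rewrite mulr_ge0 ?divr_ge0 ?hc_sum_ge0 // ltW.
have := powR_mean_le (fun u => - #|nbhd e u :&: U|%:R) q_gt0 U_gt0.
by rewrite sumrN mulNr.
Qed.

End HardCoreSums.

Section HardCoreModel.
Variables (R : realType) (T : finType) (e : rel T) (lam : R).
Hypotheses (e_sym : symmetric e) (e_irr : irreflexive e) (lam_gt0 : 0 < lam).
Local Notation q := (1 + lam).
Local Notation hc_sum := (hc_sum e lam).

Let lam_ge0 : 0 <= lam. Proof. exact: ltW. Qed.
Let q_gt0 : 0 < q. Proof. by rewrite addr_gt0. Qed.

Lemma local_occupancy_bound (v : T) (U : {set T}) (c alpha beta m : R) :
  0 <= alpha -> 0 <= beta -> U \subset nbhd e v ->
  2 * #|induced_edges e (nbhd e v)|%:R <= c ->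
  (forall z : R, 0 <= z ->
     m <= lam / q * (alpha * q `^ (- z) + beta * zpow_term lam c z)) ->
  m * (lam + hc_sum U (fun=> 1)) <= alpha * lam + beta * hc_sum U (fun K => #|K|%:R).
Proof.
move=> alpha_ge0 beta_ge0 UN c_ge hm.
have c_ge0 : 0 <= c by apply: le_trans c_ge; rewrite mulr_ge0.
set Z := hc_sum U _; set W := hc_sum U _; set n := #|U|.
have Z_gt0 : 0 < Z by apply: lt_le_trans (hc_sum1_ge1 e lam_ge0 U).
have S_gt0 : 0 < lam + Z by rewrite addr_gt0.
have lq_ge0 : 0 <= lam / q := divr_ge0 lam_ge0 (ltW q_gt0).
(* [Z / (lam + Z)] is the conditional probability that [v] is unoccupied. *)
set z1 := n%:R * Z / (lam + Z).
have z1_ge0 : 0 <= z1 := divr_ge0 (mulr_ge0 (ler0n _ _) (ltW Z_gt0)) (ltW S_gt0).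
have alpha_part : lam / q * q `^ (- z1) * (lam + Z) <= lam.
  rewrite -mulrA [_ * (lam + Z)]mulrC -[X in _ <= X](divfK (lt0r_neq0 q_gt0)).
  by apply: ler_wpM2l; rewrite // occupancy_powR_le // hc_sum1_le.
have beta_part : lam / q * zpow_term lam c z1 * (lam + Z) <= W.
  have [n0|n_gt0] := posnP n.
    by rewrite /z1 n0 !mul0r /zpow_term eqxx mulr0 mul0r hc_sum_ge0.
  have deg_sum : \sum_(u in U) #|nbhd e u :&: U|%:R <= c.
    rewrite -natr_sum; apply: le_trans c_ge; rewrite -natrM ler_nat.
    by rewrite (leq_trans (sum_card_nbhdI_le e_irr U)) // leq_mul2l induced_edgesS.
  rewrite -mulrA; apply: le_trans (ler_wpM2l lq_ge0 (zpow_term_occupancy_le lam_gt0 c_ge0 Z_gt0 n_gt0)) _.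
  apply: le_trans (hc_sum_card_ge e_sym e_irr lam_ge0 n_gt0); rewrite [n%:R * Z]mulrC !mulrA.
  apply: ler_wpM2l; first exact: mulr_ge0 (mulr_ge0 lq_ge0 (ltW Z_gt0)) (ler0n _ _).
  apply: ler_powR; first by rewrite lerDl.
  by rewrite lerN2 -/n; apply: ler_wpM2r deg_sum; rewrite invr_ge0 ler0n.
apply: le_trans (ler_wpM2r (ltW S_gt0) (hm z1 z1_ge0)) _.
have -> : lam / q * (alpha * q `^ (- z1) + beta * zpow_term lam c z1) * (lam + Z)
    = alpha * (lam / q * q `^ (- z1) * (lam + Z))
      + beta * (lam / q * zpow_term lam c z1 * (lam + Z)) by ring.
by rewrite lerD // ler_wpM2l.
Qed.

Lemma hc_Z_hc_sum : hc_Z e lam = hc_sum setT (fun=> 1).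
Proof.
rewrite /hc_Z /hc_sum big_mkcond /=; apply: eq_big => [K|K _]; first by rewrite subsetT.
by rewrite mulr1.
Qed.

Lemma hc_Z_gt0 : 0 < hc_Z e lam.
Proof. by rewrite hc_Z_hc_sum; apply: lt_le_trans (hc_sum1_ge1 _ lam_ge0 _). Qed.

Lemma hc_expectation (F : {set T} -> R) :
  \sum_(I : {set T}) hc_prob e lam I * F I = hc_sum setT F / hc_Z e lam.
Proof.
rewrite /hc_sum mulr_suml; apply: eq_big => [K|K _]; first by rewrite subsetT.
by rewrite /hc_prob /indep_wt; case: ifP; rewrite ?mul0r // mulrAC.
Qed.

Lemma hc_vertex_bound (v : T) (c alpha beta m : R) : 0 <= alpha -> 0 <= beta ->
  2 * #|induced_edges e (nbhd e v)|%:R <= c ->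
  (forall z : R, 0 <= z ->
     m <= lam / q * (alpha * q `^ (- z) + beta * zpow_term lam c z)) ->
  m <= alpha * hc_Pr_in e lam v + beta * hc_E_nbhd e lam v.
Proof.
move=> alpha_ge0 beta_ge0 c_ge hm.
pose g (I : {set T}) := alpha * (v \in I)%:R + beta * #|nbhd e v :&: I|%:R.
have -> : alpha * hc_Pr_in e lam v + beta * hc_E_nbhd e lam v = hc_sum setT g / hc_Z e lam.
  rewrite -hc_expectation /hc_Pr_in /hc_E_nbhd big_mkcond !mulr_sumr -big_split /=.
  by apply: eq_bigr => I _; rewrite /g; case: (v \in I); rewrite /= ?mulr0; ring.
rewrite ler_pdivlMr ?hc_Z_gt0 // hc_Z_hc_sum.
rewrite !(hc_sum_condition lam e_sym e_irr _ (in_setT v)) mulr_sumr; apply: ler_sum => J.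
move=> /subsetDP[_]; rewrite disjoints_subset => /subsetP Jcl.
have vJ : v \notin J by apply/negP => /Jcl; rewrite in_setC in_setU1 eqxx.
have NJ : nbhd e v :&: J = set0.
  apply/setP => u; rewrite !inE; apply/andP => -[evu /Jcl].
  by rewrite in_setC in_setU1 inE evu orbT.
set U := _ :&: _ :&: uncovered e J.
have UN : U \subset nbhd e v by rewrite /U -setIA setTI subsetIl.
have g_v : g (J :|: [set v]) = alpha.
  rewrite /g setIUr NJ set0U (_ : _ :&: _ = set0) ?cards0 ?mulr0 ?addr0; last first.
    by apply/setP => u; rewrite !inE; case: eqP => [->|_]; rewrite ?e_irr ?andbF.
  by rewrite !inE eqxx orbT mulr1.
have g_C : hc_sum U (fun C => g (J :|: C)) = beta * hc_sum U (fun C => #|C|%:R).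
  rewrite -hc_sumZ; apply: eq_hc_sum => C /subset_trans/(_ UN) CN.
  rewrite /g setIUr NJ set0U (setIidPr CN) !inE (negPf vJ) /=.
  rewrite (_ : v \in C = false) ?mulr0 ?add0r //.
  by apply/negP => /(subsetP CN); rewrite inE e_irr.
rewrite g_v g_C mulr1 mulrCA; apply: ler_wpM2l; first exact: indep_wt_ge0.
by rewrite [lam * alpha]mulrC (local_occupancy_bound alpha_ge0 beta_ge0 UN c_ge hm).
Qed.

Lemma hc_prob_ge0 (I : {set T}) : 0 <= hc_prob e lam I.
Proof.
rewrite /hc_prob; case: ifP => // _.
exact: divr_ge0 (exprn_ge0 _ lam_ge0) (ltW hc_Z_gt0).
Qed.

Lemma hc_E_size_sum_Pr : hc_E_size e lam = \sum_(v : T) hc_Pr_in e lam v.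
Proof.
rewrite /hc_E_size /hc_Pr_in; under [RHS]eq_bigr => v _ do rewrite big_mkcond /=.
by rewrite exchange_big /=; apply: eq_bigr => I _; rewrite -big_mkcond /= sumr_const mulr_natl.
Qed.

Lemma sum_hc_E_nbhd_le :
  \sum_(v : T) hc_E_nbhd e lam v <= (maxdeg e)%:R * hc_E_size e lam.
Proof.
rewrite /hc_E_nbhd /hc_E_size exchange_big mulr_sumr; apply: ler_sum => I _ /=.
rewrite -mulr_suml mulrA ler_wpM2r ?hc_prob_ge0 // -natr_sum -natrM ler_nat.
rewrite sum_card_nbhdI // mulnC -sum_nat_const; apply: leq_sum => u _; exact: leq_bigmax.
Qed.

Lemma hc_E_size_gt0 : (0 < #|T|)%N -> 0 < hc_E_size e lam.
Proof.
case/card_gt0P => v _; rewrite /hc_E_size (bigD1 [set v]) //= cards1 mul1r.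
apply: ltr_wpDr; first by apply: sumr_ge0 => I _; rewrite mulr_ge0 ?ler0n ?hc_prob_ge0.
rewrite /hc_prob independent1 //; exact: divr_gt0 (exprn_gt0 _ lam_gt0) hc_Z_gt0.
Qed.

Lemma hc_average_bound (alpha beta m : R) : 0 <= beta -> (0 < #|T|)%N ->
  (forall v, m <= alpha * hc_Pr_in e lam v + beta * hc_E_nbhd e lam v) ->
  m <= (alpha + beta * (maxdeg e)%:R) * (hc_E_size e lam / #|T|%:R).
Proof.
move=> beta_ge0 T_gt0 hm; rewrite mulrA ler_pdivlMr ?ltr0n //.
rewrite (_ : m * #|T|%:R = \sum_(v : T) m); last by rewrite sumr_const mulr_natr.
apply: le_trans (ler_sum _ (fun v _ => hm v)) _.
rewrite big_split -!mulr_sumr -hc_E_size_sum_Pr mulrDl lerD2l -mulrA.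
by apply: ler_wpM2l => //; exact: sum_hc_E_nbhd_le.
Qed.

End HardCoreModel.

Theorem lemma3p2 (R : realType) (T : finType) (e : rel T)
  (f lam alpha beta : R)
  (e_sym : symmetric e) (e_irr : irreflexive e)
  (f_gt0 : 0 < f) (lam_gt0 : 0 < lam) (alpha_gt0 : 0 < alpha) (beta_gt0 : 0 < beta)
  (T_nonempty : (0 < #|T|)%N) (Delta_ge1 : (1 <= maxdeg e)%N)
  (sparse_nbhd : forall v : T,
     (#|induced_edges e (nbhd e v)|)%:R <= ((maxdeg e)%:R ^+ 2) / f) :
  (forall v : T, forall m : R,
     (forall z : R, 0 <= z ->
        m <= lam / (1 + lam) *
             (alpha * (1 + lam) `^ (- z)
              + beta * zpow_term lam (2 * (maxdeg e)%:R ^+ 2 / f) z)) ->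
     m <= alpha * hc_Pr_in e lam v + beta * hc_E_nbhd e lam v)
  /\
  (forall m : R,
     (forall z : R, 0 < z ->
        m <= Num.max (lam / (1 + lam) * (1 + lam) `^ (- z))
                     (lam / (1 + lam) * (z / (maxdeg e)%:R) *
                      (1 + lam) `^ (- (2 * (maxdeg e)%:R ^+ 2 / (f * z))))) ->
     m <= hc_E_size e lam / (#|T|)%:R).
Proof.
set c := 2 * (maxdeg e)%:R ^+ 2 / f.
have c_ge v : 2 * #|induced_edges e (nbhd e v)|%:R <= c by rewrite /c -mulrA ler_wpM2l.
have c_ge0 : 0 <= c by rewrite divr_ge0 ?mulr_ge0 ?exprn_ge0 // ltW.
split=> [v m hm|m hm].
  by apply: (hc_vertex_bound e_sym e_irr lam_gt0 (ltW alpha_gt0) (ltW beta_gt0) (c_ge v)).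
apply: (max_le_of_weighted_bounds lam_gt0 c_ge0 (D := (maxdeg e)%:R)).
- by rewrite ltr0n.
- by rewrite divr_gt0 ?ltr0n // hc_E_size_gt0.
- move=> a b mu a_gt0 b_gt0 hmu; apply: hc_average_bound => // [|v]; first exact: ltW.
  by apply: (hc_vertex_bound e_sym e_irr lam_gt0 (ltW a_gt0) (ltW b_gt0) (c_ge v)).
- move=> z z_gt0; rewrite (_ : c / z = 2 * (maxdeg e)%:R ^+ 2 / (f * z)) ?hm //.
  by rewrite /c -mulrA -invfM.
Qed.
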